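(* Fix $(\mu,\sigma)\in S_\lambda\times\Omega$, and let $\widehat\sigma\in\Omega$ be such that the auxiliary TASEP transition probability $\mathbb P(\widehat\sigma\to\sigma)$ is positive. Then there is a family $(g^{\widehat\sigma}_{\widehat\mu})_{\widehat\mu\in S_\lambda}$ of functions $\mathbb R_{>1}\to\mathbb R$ with $g^{\widehat\sigma}_{\widehat\mu}(z)=O(1/z)$ as $z\to\infty$ such that, for all $R>1$, \[\sum_{\widehat\mu\in S_\lambda}\mathbb P\big((\widehat\mu,\widehat\sigma)\to(\mu,\sigma)\big)\,\Psi_{\widehat\mu}(\widehat\sigma\boldsymbol\chi)\,\big(1+g^{\widehat\sigma}_{\widehat\mu}(R)\big)=\Psi_\mu(\sigma\boldsymbol\chi)\,\mathbb P(\widehat\sigma\to\sigma),\] where the probabilities on the left are transition probabilities of $\blacktriangle\mathrm{iTASEP}_\lambda$ and $\boldsymbol\chi$ depends on $R$.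
   Context: Fix parameters $a_k\in(0,1)$ ($k\ge0$) and a nondecreasing tuple $\lambda$ of nonnegative integers with rearrangement set $S_\lambda$. For $w\in\mathfrak S_n$, $wy=(y_{w^{-1}(1)},\dots,y_{w^{-1}(n)})$ and $(wf)(\mathbf x)=f(w\mathbf x)$. Indices mod $n$; $\overline s_i$ ($i\in\mathbb Z/n\mathbb Z$) the transposition of $i,i+1$; $c=(1\,2\cdots n)$. Inhomogeneous TASEP polynomials $(\Psi_\mu(\mathbf x))_{\mu\in S_\lambda}$ (coefficients rational in the $a$'s) are determined up to a common scalar (fixed) by: $\frac{x_i(x_{i+1}-a_{\mu_{i+1}})}{a_{\mu_{i+1}}(x_i-x_{i+1})}(1-\overline s_i)\Psi_\mu=\Psi_{\overline s_i\mu}$ if $\mu_i<\mu_{i+1}$; $\overline s_i\Psi_\mu=\Psi_\mu$ if $\mu_i=\mu_{i+1}$; $c\Psi_{c\mu}=\Psi_\mu$. Stones $\blacktriangle_1,\dots,\blacktriangle_n$ with densities in $\{1,2\}$, $1=\varrho(\blacktriangle_1)\le\cdots\le\varrho(\blacktriangle_n)=2$. $\Omega$: the $\sigma\in\mathfrak S_n$ such that stones of each density appear in the same cyclic order in $\blacktriangle_{\sigma^{-1}(1)},\dots,\blacktriangle_{\sigma^{-1}(n)}$ as in $\blacktriangle_1,\dots,\blacktriangle_n$. $\mathfrak K(\sigma)=\#\{i:\varrho(\blacktriangle_{\sigma^{-1}(i)})<\varrho(\blacktriangle_{\sigma^{-1}(i+1)})\}$. Auxiliary TASEP on $\Omega$: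 $\mathbb P(\sigma\to\overline s_i\sigma)=1/n$ if $\varrho(\blacktriangle_{\sigma^{-1}(i)})<\varrho(\blacktriangle_{\sigma^{-1}(i+1)})$, $\mathbb P(\sigma\to\sigma)=1-\mathfrak K(\sigma)/n$, others $0$. For $j$ with $\varrho(\blacktriangle_j)=1$, $p(j)\in[0,1)$ fixed. For $R>1$, $\boldsymbol\chi=(\chi_j)$ with $\chi_j=1/p(j)$ if $\varrho(\blacktriangle_j)=1$ and $p(j)>0$, $\chi_j=R$ otherwise. $\blacktriangle\mathrm{iTASEP}_\lambda$ on $S_\lambda\times\Omega$: if $\varrho(\blacktriangle_{\sigma^{-1}(i)})<\varrho(\blacktriangle_{\sigma^{-1}(i+1)})$ and $\mu_i>\mu_{i+1}$, $\mathbb P((\mu,\sigma)\to(\overline s_i\mu,\overline s_i\sigma))=\frac1np(\sigma^{-1}(i))a_{\mu_i}$, $\mathbb P((\mu,\sigma)\to(\mu,\overline s_i\sigma))=\frac1n[1-p(\sigma^{-1}(i))a_{\mu_i}]$; if the density condition holds and $\mu_i\le\mu_{i+1}$, $\mathbb P((\mu,\sigma)\to(\mu,\overline s_i\sigma))=\frac1n$; $\mathbb P((\mu,\sigma)\to(\mu,\sigma))=1-\mathfrak K(\sigma)/n$; others $0$. *)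

From HB Require Import structures.
From mathcomp Require Import all_boot all_order all_algebra all_fingroup.
From mathcomp Require Import reals.
From mathcomp Require Import mpoly.
Set Implicit Arguments. Unset Strict Implicit. Unset Printing Implicit Defensive.
Import Order.TTheory GRing.Theory Num.Theory.
Local Open Scope ring_scope.

(* Positions are 'I_n (position j <-> paper's j+1).  Indices are taken mod n. *)

Definition nxt {n : nat} (i : 'I_n) : 'I_n := ordS i.

Definition sbar {n : nat} (i : 'I_n) : {perm 'I_n} := tperm i (nxt i).

Definition ccyc {n : nat} : {perm 'I_n} := perm (@ordS_inj n).

Definition actv {n : nat} {T : Type} (w : {perm 'I_n}) (y : 'I_n -> T) : 'I_n -> T :=
  fun j => y ((w^-1)%g j).

(* Compositions of permutations: the paper's w1 w2 (apply w2 first, then w1)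
   is mathcomp's (w2 * w1)%g. *)
Definition pcomp {n : nat} (w1 w2 : {perm 'I_n}) : {perm 'I_n} := (w2 * w1)%g.

Notation cfg n := {ffun 'I_n -> nat}.

Definition actc {n : nat} (w : {perm 'I_n}) (mu : cfg n) : cfg n :=
  [ffun j => mu ((w^-1)%g j)].

Definition Slam {n : nat} (lam : cfg n) : seq (cfg n) :=
  undup [seq actc w lam | w <- enum {perm 'I_n}].

Definition nondecr {n : nat} (lam : cfg n) : Prop :=
  forall i j : 'I_n, (i <= j)%N -> (lam i <= lam j)%N.

(* Inhomogeneous TASEP polynomials: a family of real polynomials in x_1..x_n
   satisfying the defining relations (the first one with denominators cleared;
   identities of polynomial functions, stated pointwise). *)
Definition is_iTASEP_family {R : realType} {n : nat} (a : nat -> R) (lam : cfg n)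
    (Psi : cfg n -> {mpoly R[n]}) : Prop :=
  (forall mu, mu \in Slam lam -> forall i : 'I_n, (mu i < mu (nxt i))%N ->
     forall x : 'I_n -> R,
       x i * (x (nxt i) - a (mu (nxt i))) * ((Psi mu).@[x] - (Psi mu).@[actv (sbar i) x])
       = a (mu (nxt i)) * (x i - x (nxt i)) * (Psi (actc (sbar i) mu)).@[x]) /\
  (forall mu, mu \in Slam lam -> forall i : 'I_n, mu i = mu (nxt i) ->
     forall x : 'I_n -> R, (Psi mu).@[actv (sbar i) x] = (Psi mu).@[x]) /\
  (forall mu, mu \in Slam lam ->
     forall x : 'I_n -> R, (Psi (actc ccyc mu)).@[actv ccyc x] = (Psi mu).@[x]).

(* Stones: rho j in {1,2} is the density of stone j; nondecreasing,
   first stone has density 1 and last has density 2. *)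
Definition stones_ok {n : nat} (rho : 'I_n -> nat) : Prop :=
  (forall j, rho j = 1%N \/ rho j = 2%N) /\
  (forall i j : 'I_n, (i <= j)%N -> (rho i <= rho j)%N) /\
  (exists j : 'I_n, nat_of_ord j = 0%N /\ rho j = 1%N) /\
  (exists j : 'I_n, nat_of_ord j = n.-1 /\ rho j = 2%N).

(* Omega: for each density d, the stones of density d appear in
   (stone_{sigma^-1(1)}, ..., stone_{sigma^-1(n)}) in the same cyclic order
   as in (stone_1, ..., stone_n). *)
Definition inOmega {n : nat} (rho : 'I_n -> nat) (sigma : {perm 'I_n}) : Prop :=
  forall d : nat,
    exists k : nat,
      rot k [seq j <- enum 'I_n | rho j == d]
      = [seq (sigma^-1)%g i | i <- enum 'I_n & rho ((sigma^-1)%g i) == d].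

Definition dens_lt {n : nat} (rho : 'I_n -> nat) (sigma : {perm 'I_n}) (i : 'I_n) : bool :=
  (rho ((sigma^-1)%g i) < rho ((sigma^-1)%g (nxt i)))%N.

Definition Kfrak {n : nat} (rho : 'I_n -> nat) (sigma : {perm 'I_n}) : nat :=
  #|[pred i : 'I_n | dens_lt rho sigma i]|.

Definition Paux {R : realType} {n : nat} (rho : 'I_n -> nat) (sigma tau : {perm 'I_n}) : R :=
  \sum_(i : 'I_n | dens_lt rho sigma i)
     (if tau == pcomp (sbar i) sigma then n%:R^-1 else 0)
  + (if tau == sigma then 1 - (Kfrak rho sigma)%:R / n%:R else 0).

Definition Pitasep {R : realType} {n : nat} (a : nat -> R) (p : 'I_n -> R)
    (rho : 'I_n -> nat) (mu : cfg n) (sigma : {perm 'I_n})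
    (mu' : cfg n) (sigma' : {perm 'I_n}) : R :=
  \sum_(i : 'I_n | dens_lt rho sigma i)
     (if (mu (nxt i) < mu i)%N then
        (if (mu' == actc (sbar i) mu) && (sigma' == pcomp (sbar i) sigma)
         then n%:R^-1 * p ((sigma^-1)%g i) * a (mu i) else 0)
        + (if (mu' == mu) && (sigma' == pcomp (sbar i) sigma)
           then n%:R^-1 * (1 - p ((sigma^-1)%g i) * a (mu i)) else 0)
      else
        (if (mu' == mu) && (sigma' == pcomp (sbar i) sigma) then n%:R^-1 else 0))
  + (if (mu' == mu) && (sigma' == sigma) then 1 - (Kfrak rho sigma)%:R / n%:R else 0).

Definition chi {R : realType} {n : nat} (rho : 'I_n -> nat) (p : 'I_n -> R) (Rz : R)
    : 'I_n -> R :=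
  fun j => if (rho j == 1%N) && (0 < p j) then (p j)^-1 else Rz.

Definition bigO_inv {R : realType} (g : R -> R) : Prop :=
  exists C z0 : R, forall z : R, z0 < z -> `|g z| <= C / z.

From Pilot Require Import Defs.
From HB Require Import structures.
From mathcomp Require Import all_boot all_order all_algebra all_fingroup.
From mathcomp Require Import reals.
From mathcomp Require Import mpoly.
From mathcomp Require Import ring lra.
From Stdlib Require Import FunctionalExtensionality.
(* Re-imported so that [pcomp] means [Defs.pcomp], not [ssrfun.pcomp]. *)
Import Defs.

Set Implicit Arguments.
Unset Strict Implicit.
Unset Printing Implicit Defensive.

Import Order.TTheory GRing.Theory Num.Theory.
Local Open Scope ring_scope.

(* A positive auxiliary transition either keeps [sigmah], where only the
   holding term [muh = mu] contributes, or moves the density-1 stone at a 1-2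
   boundary [i] one step forward.  In the latter case only positions [i] and
   [i+1] are involved, so only [muh = mu] and [muh = s_i mu] contribute, and at
   [x = sigmah chi] we have [x_i = 1/p] (or [R] when [p = 0]) and [x_(i+1) = R].
   The exchange relations of the TASEP polynomials express [Psi_mu(s_i x)]
   through [Psi_mu(x)] and [Psi_(s_i mu)(x)] with coefficients rational in [R];
   matching coefficients leaves the corrections [a / (R - a)] or
   [(p a - 1) / (p (R - a))], both [O(1/R)]. *)

Section DensityBoundary.
Variables (n : nat) (rho : 'I_n -> nat) (s : {perm 'I_n}).

Lemma dens_lt_nxt_neq i : dens_lt rho s i -> nxt i != i.
Proof. by move=> lt_i; apply/eqP => ei; move: lt_i; rewrite /dens_lt ei ltnn. Qed.

Lemma dens_lt_sbar_inj i j :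
  dens_lt rho s i -> dens_lt rho s j -> sbar i = sbar j -> i = j.
Proof.
move=> lt_i lt_j e; have := congr1 (fun w : {perm 'I_n} => w j) e.
rewrite /sbar tpermL; case: (eqVneq j i) => [//|nji].
case: (eqVneq j (nxt i)) => [ej|nj].
  move: lt_i lt_j; rewrite ej tpermR /dens_lt => lt1 + ei; rewrite -ei => lt2.
  by have := ltn_trans lt1 lt2; rewrite ltnn.
by rewrite tpermD 1?eq_sym // => ej; move: (dens_lt_nxt_neq lt_j); rewrite -ej eqxx.
Qed.

Lemma pcomp_sbar_neq i : dens_lt rho s i -> pcomp (sbar i) s != s.
Proof.
move=> lt_i; apply/eqP => e; have e1 : sbar i = 1%g by apply: (mulgI s); rewrite mulg1.
have := congr1 (fun w : {perm 'I_n} => w i) e1.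
by rewrite /sbar tpermL perm1 => ei; move: (dens_lt_nxt_neq lt_i); rewrite ei eqxx.
Qed.

Lemma pcomp_sbar_eq i j : dens_lt rho s i -> dens_lt rho s j ->
  (pcomp (sbar i) s == pcomp (sbar j) s) = (i == j).
Proof.
move=> lt_i lt_j; apply/eqP/eqP => [/(mulgI s)|->//].
exact: dens_lt_sbar_inj.
Qed.

Lemma dens_lt_12 i : (forall j, rho j = 1%N \/ rho j = 2%N) -> dens_lt rho s i ->
  rho ((s^-1)%g i) = 1%N /\ rho ((s^-1)%g (nxt i)) = 2%N.
Proof.
rewrite /dens_lt => rho12.
by case: (rho12 ((s^-1)%g i)) => ->; case: (rho12 ((s^-1)%g (nxt i))) => ->.
Qed.

End DensityBoundary.

Section SwapActions.
Variables (n : nat) (i : 'I_n).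

Lemma actv_pcomp T (w s : {perm 'I_n}) (y : 'I_n -> T) :
  actv (pcomp w s) y = actv w (actv s y).
Proof. by apply: functional_extensionality => j; rewrite /actv /pcomp invMg permM. Qed.

Lemma actv_sbar_i T (y : 'I_n -> T) : actv (sbar i) y i = y (nxt i).
Proof. by rewrite /actv /sbar tpermV tpermL. Qed.

Lemma actv_sbar_nxt T (y : 'I_n -> T) : actv (sbar i) y (nxt i) = y i.
Proof. by rewrite /actv /sbar tpermV tpermR. Qed.

Lemma actv_sbarK T (y : 'I_n -> T) : actv (sbar i) (actv (sbar i) y) = y.
Proof. by apply: functional_extensionality => j; rewrite /actv /sbar tpermV tpermK. Qed.

Lemma actv_sbar_id T (y : 'I_n -> T) : y i = y (nxt i) -> actv (sbar i) y = y.
Proof.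
move=> e; apply: functional_extensionality => j; rewrite /actv /sbar tpermV.
by case: tpermP => [->|->|].
Qed.

Lemma actc_sbar_i (m : cfg n) : actc (sbar i) m i = m (nxt i).
Proof. by rewrite /actc ffunE /sbar tpermV tpermL. Qed.

Lemma actc_sbar_nxt (m : cfg n) : actc (sbar i) m (nxt i) = m i.
Proof. by rewrite /actc ffunE /sbar tpermV tpermR. Qed.

Lemma actc_sbarK (m : cfg n) : actc (sbar i) (actc (sbar i) m) = m.
Proof. by apply/ffunP => j; rewrite /actc !ffunE /sbar tpermV tpermK. Qed.

Lemma actc_sbar_id (m : cfg n) : m i = m (nxt i) -> actc (sbar i) m = m.
Proof.
move=> e; apply/ffunP => j; rewrite /actc ffunE /sbar tpermV.
by case: tpermP => [->|->|].
Qed.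

Lemma actc_sbar_neq (m : cfg n) : m i != m (nxt i) -> actc (sbar i) m != m.
Proof. by apply: contra => /eqP e; rewrite -{1}e actc_sbar_i. Qed.

Lemma actc_Slam (lam m : cfg n) : m \in Slam lam -> actc (sbar i) m \in Slam lam.
Proof.
rewrite /Slam !mem_undup => /mapP[w _ ->]; apply/mapP.
exists (w * sbar i)%g; first by rewrite mem_enum.
by apply/ffunP => j; rewrite /actc !ffunE invMg permM.
Qed.

End SwapActions.

Section SupportedSums.
Variables (V : nmodType) (T : eqType).

Lemma big_uniq_supp1 (r : seq T) (F : T -> V) x : uniq r -> x \in r ->
  (forall z, z \in r -> z != x -> F z = 0) -> \sum_(z <- r) F z = F x.
Proof.
move=> r_uniq xr F0; rewrite (bigD1_seq x) //= big1_seq ?addr0 // => z /andP[zx zr].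
exact: F0.
Qed.

Lemma big_uniq_supp2 (r : seq T) (F : T -> V) x y : uniq r -> x \in r -> y \in r ->
  y != x -> (forall z, z \in r -> z != x -> z != y -> F z = 0) ->
  \sum_(z <- r) F z = F x + F y.
Proof.
move=> r_uniq xr yr yx F0; rewrite (bigD1_seq x) //= -big_filter.
rewrite (@big_uniq_supp1 _ _ y (filter_uniq _ r_uniq)) ?mem_filter ?yx // => z.
by rewrite mem_filter => /andP[zx zr]; apply: F0.
Qed.

End SupportedSums.

Lemma bigO_inv_frac (R : realType) (c b : R) :
  0 <= b < 1 -> bigO_inv (fun z => c / (z - b)).
Proof.
move=> /andP[b0 b1]; exists (2 * `|c|), 2 => z z2.
have z0 : 0 < z by lra.
have zb : 0 < z - b by lra.
rewrite normrM normfV (gtr0_norm zb) -subr_ge0.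
have -> : 2 * `|c| / z - `|c| / (z - b) = `|c| * ((z - 2 * b) / (z * (z - b))).
  by field; rewrite ?gt_eqF // mulr_gt0.
rewrite mulr_ge0 // divr_ge0 ?mulr_ge0 ?ltW //; lra.
Qed.

Lemma bigO_inv0 (R : realType) : bigO_inv (fun _ : R => 0).
Proof. by exists 0, 0 => z _; rewrite normr0 mul0r. Qed.

Section ExchangeRelations.
Variables (R : realType) (n : nat) (a : nat -> R) (lam : cfg n).
Variable Psi : cfg n -> {mpoly R[n]}.
Hypothesis family : is_iTASEP_family a lam Psi.
Variables (mu : cfg n) (i : 'I_n) (x : 'I_n -> R).
Hypothesis mu_lam : mu \in Slam lam.

Lemma Psi_exchange_lt : (mu i < mu (nxt i))%N ->
  x i != 0 -> x (nxt i) != a (mu (nxt i)) ->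
  (Psi mu).@[actv (sbar i) x] = (Psi mu).@[x]
    - a (mu (nxt i)) * (x i - x (nxt i)) / (x i * (x (nxt i) - a (mu (nxt i))))
      * (Psi (actc (sbar i) mu)).@[x].
Proof.
move=> lt_mu xi0 xa; have [rel_lt _] := family.
have := rel_lt mu mu_lam i lt_mu x.
set b := a _; set N := (Psi (actc _ _)).@[x]; set M := (Psi mu).@[x] => e.
have -> : b * (x i - x (nxt i)) / (x i * (x (nxt i) - b)) * N
        = b * (x i - x (nxt i)) * N / (x i * (x (nxt i) - b)) by rewrite mulrAC.
by rewrite -e; field; rewrite xi0 subr_eq0 xa.
Qed.

(* Both relations for [s_i mu], at [x] and at [s_i x], are needed: their sum
   eliminates [Psi_(s_i mu)]. *)
Lemma Psi_exchange_gt : (mu (nxt i) < mu i)%N ->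
  a (mu i) != 0 -> x i != 0 -> x (nxt i) != a (mu i) ->
  (Psi mu).@[actv (sbar i) x] = x (nxt i) * (x i - a (mu i))
    / (x i * (x (nxt i) - a (mu i))) * (Psi mu).@[x].
Proof.
move=> gt_mu b0 xi0 xa; have [rel_lt _] := family.
set nu := actc (sbar i) mu.
have nu_lam : nu \in Slam lam by apply: actc_Slam.
have lt_nu : (nu i < nu (nxt i))%N by rewrite actc_sbar_i actc_sbar_nxt.
have e1 := rel_lt nu nu_lam i lt_nu x.
have e2 := rel_lt nu nu_lam i lt_nu (actv (sbar i) x).
rewrite /nu actc_sbar_nxt actc_sbarK in e1 e2.
rewrite actv_sbar_i actv_sbar_nxt actv_sbarK in e2.
move: e1 e2; set b := a (mu i); set Y := x (nxt i).
set M := (Psi mu).@[x]; set M' := (Psi mu).@[actv _ x] => e1 e2.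
have Yb : Y - b != 0 by rewrite subr_eq0.
have [xY|xY] := eqVneq (x i) Y.
  rewrite /M' actv_sbar_id // xY; field.
  by rewrite Yb -xY.
have k : b * (Y - x i) * (x i * (Y - b) * M' - Y * (x i - b) * M) = 0.
  transitivity (x i * (Y - b) * (b * (Y - x i) * M')
                + Y * (x i - b) * (b * (x i - Y) * M)); first by ring.
  by rewrite -e1 -e2; ring.
have {}k : x i * (Y - b) * M' = Y * (x i - b) * M.
  have bYx : b * (Y - x i) != 0 by rewrite mulf_neq0 // subr_eq0 eq_sym.
  by apply/eqP; rewrite -subr_eq0 -(mulrI_eq0 _ (mulfI bYx)) k.
apply: (@mulfI _ (x i * (Y - b))); first by rewrite mulf_neq0.
by rewrite mulrA k; field; rewrite xi0 Yb.
Qed.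

End ExchangeRelations.

(* The probability of [(muh, s) -> (mu, s_i s)] in the coupled chain when [i]
   is a 1-2 boundary of [s] and [q = p(s^-1 i)]. *)
Definition jump_rate {R : fieldType} {n : nat} (a : nat -> R) (q : R)
    (i : 'I_n) (muh mu : cfg n) : R :=
  if (muh (nxt i) < muh i)%N then
    (if mu == actc (sbar i) muh then n%:R^-1 * q * a (muh i) else 0)
    + (if mu == muh then n%:R^-1 * (1 - q * a (muh i)) else 0)
  else (if mu == muh then n%:R^-1 else 0).

Section ChainTransitions.
Variables (R : realType) (n : nat) (a : nat -> R) (p : 'I_n -> R).
Variables (rho : 'I_n -> nat) (s : {perm 'I_n}).

Lemma Paux_gt0_cases sigma : 0 < Paux (R:=R) rho s sigma ->
  sigma = s \/ exists2 i, dens_lt rho s i & sigma = pcomp (sbar i) s.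
Proof.
move=> Pgt0; have [->|ne] := eqVneq sigma s; [by left | right].
case: (pickP (fun i => dens_lt rho s i && (sigma == pcomp (sbar i) s))).
  by move=> i /andP[lt_i /eqP ->]; exists i.
move=> none; move: Pgt0; rewrite /Paux (negbTE ne) addr0 big1 ?ltxx // => i lt_i.
by have := none i; rewrite /= lt_i /= => ->.
Qed.

Lemma Pitasep_stay muh mu :
  Pitasep a p rho muh s mu s = (mu == muh)%:R * Paux (R:=R) rho s s.
Proof.
have no_jump i : dens_lt rho s i -> (s == pcomp (sbar i) s) = false.
  by move=> lt_i; rewrite eq_sym (negbTE (pcomp_sbar_neq lt_i)).
rewrite /Paux /Pitasep !big1 ?add0r ?eqxx ?andbT => [|i lt_i|i lt_i]; last 2 first.
- by rewrite (no_jump _ lt_i).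
- by rewrite (no_jump _ lt_i) !andbF; case: ifP; rewrite ?addr0.
by case: (mu == muh); rewrite ?mul1r ?mul0r.
Qed.

Lemma Paux_jump i : dens_lt rho s i -> Paux (R:=R) rho s (pcomp (sbar i) s) = n%:R^-1.
Proof.
move=> lt_i; rewrite /Paux (bigD1 i) //= eqxx (negbTE (pcomp_sbar_neq lt_i)).
rewrite big1 ?addr0 // => j /andP[lt_j ji].
by rewrite (pcomp_sbar_eq lt_i lt_j) [i == j]eq_sym (negbTE ji).
Qed.

Lemma Pitasep_jump i muh mu : dens_lt rho s i ->
  Pitasep a p rho muh s mu (pcomp (sbar i) s)
  = jump_rate a (p ((s^-1)%g i)) i muh mu.
Proof.
move=> lt_i; rewrite /Pitasep (bigD1 i) //= eqxx !andbT.
rewrite (negbTE (pcomp_sbar_neq lt_i)) !andbF addr0 big1 ?addr0 // => j /andP[lt_j ji].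
rewrite (pcomp_sbar_eq lt_i lt_j) [i == j]eq_sym (negbTE ji) !andbF.
by case: ifP; rewrite ?addr0.
Qed.

End ChainTransitions.

Section JumpRates.
Variables (R : fieldType) (n : nat) (a : nat -> R) (q : R) (i : 'I_n) (mu : cfg n).

Lemma jump_rate_other muh : muh != mu -> muh != actc (sbar i) mu ->
  jump_rate a q i muh mu = 0.
Proof.
move=> ne1 ne2; rewrite /jump_rate [mu == muh]eq_sym (negbTE ne1) addr0.
case: ifP => // _; case: eqP => // e.
by move: ne2; rewrite e actc_sbarK eqxx.
Qed.

Lemma jump_rate_self : jump_rate a q i mu mu
  = if (mu (nxt i) < mu i)%N then n%:R^-1 * (1 - q * a (mu i)) else n%:R^-1.
Proof.
rewrite /jump_rate eqxx; case: ifP => // gt_mu.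
suff /negbTE -> : mu != actc (sbar i) mu by rewrite add0r.
by rewrite eq_sym actc_sbar_neq // neq_ltn gt_mu orbT.
Qed.

Lemma jump_rate_swap_lt : (mu i < mu (nxt i))%N ->
  jump_rate a q i (actc (sbar i) mu) mu = n%:R^-1 * q * a (mu (nxt i)).
Proof.
move=> lt_mu; have ne : mu != actc (sbar i) mu.
  by rewrite eq_sym actc_sbar_neq // neq_ltn lt_mu.
by rewrite /jump_rate actc_sbar_i actc_sbar_nxt lt_mu actc_sbarK eqxx (negbTE ne) addr0.
Qed.

Lemma jump_rate_swap_gt : (mu (nxt i) < mu i)%N ->
  jump_rate a q i (actc (sbar i) mu) mu = 0.
Proof.
move=> gt_mu; have ne : mu != actc (sbar i) mu.
  by rewrite eq_sym actc_sbar_neq // neq_ltn gt_mu orbT.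
by rewrite /jump_rate actc_sbar_i actc_sbar_nxt ltnNge (ltnW gt_mu) /= (negbTE ne).
Qed.

End JumpRates.

Section JumpBalance.
Variables (R : realType) (n : nat) (a : nat -> R) (lam : cfg n).
Variable Psi : cfg n -> {mpoly R[n]}.
Hypothesis a01 : forall k, 0 < a k < 1.
Hypothesis family : is_iTASEP_family a lam Psi.
Variables (i : 'I_n) (q : R) (mu : cfg n) (x : R -> 'I_n -> R).
Hypotheses (q01 : 0 <= q < 1) (mu_lam : mu \in Slam lam).
Hypothesis x_i : forall z, x z i = if 0 < q then q^-1 else z.
Hypothesis x_nxt : forall z, x z (nxt i) = z.

Let n_neq0 : n%:R != 0 :> R.
Proof. by rewrite pnatr_eq0 -lt0n (leq_ltn_trans _ (ltn_ord i)). Qed.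

Let a_neq0 k : a k != 0.
Proof. by have /andP[a0 _] := a01 k; rewrite gt_eqF. Qed.

Let x_i_neq0 z : 1 < z -> x z i != 0.
Proof. by move=> z1; rewrite x_i; case: ifP => [q0|_]; rewrite gt_eqF ?invr_gt0 //; lra. Qed.

Let x_nxt_neq_a z k : 1 < z -> x z (nxt i) != a k.
Proof. by move=> z1; rewrite x_nxt gt_eqF //; have /andP[_ ak1] := a01 k; lra. Qed.

Let z_sub_a_neq0 z k : 1 < z -> z - a k != 0.
Proof. by move=> z1; rewrite subr_eq0 -(x_nxt z) x_nxt_neq_a. Qed.

Let q_eq0 : ~~ (0 < q) -> q = 0.
Proof. by move=> qn; apply/eqP; rewrite eq_le leNgt qn (andP q01).1. Qed.

Let x_i_q0 z : ~~ (0 < q) -> x z i = z.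
Proof. by move=> qn; rewrite x_i (negbTE qn). Qed.

Let nu_lam : actc (sbar i) mu \in Slam lam.
Proof. exact: actc_Slam. Qed.

Definition balance_eq (g : cfg n -> R -> R) : Prop :=
  forall z, 1 < z ->
    \sum_(muh <- Slam lam) jump_rate a q i muh mu * (Psi muh).@[x z] * (1 + g muh z)
    = (Psi mu).@[actv (sbar i) (x z)] * n%:R^-1.

Lemma jump_balance_eq : mu i = mu (nxt i) -> balance_eq (fun _ _ => 0).
Proof.
move=> eq_mu z _; have [_ [rel_eq _]] := family.
rewrite (big_uniq_supp1 (undup_uniq _) mu_lam) => [|muh _ ne].
  by rewrite jump_rate_self eq_mu ltnn rel_eq // addr0 mulr1 mulrC.
by rewrite jump_rate_other ?mul0r // actc_sbar_id.
Qed.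

Lemma jump_balance_lt : (mu i < mu (nxt i))%N ->
  balance_eq (fun muh z => if muh == actc (sbar i) mu
    then (q * a (mu (nxt i)) - 1) / q / (z - a (mu (nxt i))) else 0).
Proof.
move=> lt_mu z z1; have nu_neq : actc (sbar i) mu != mu.
  by rewrite actc_sbar_neq // neq_ltn lt_mu.
rewrite (big_uniq_supp2 (undup_uniq _) mu_lam nu_lam nu_neq) => [|muh _ ne1 ne2].
  rewrite jump_rate_self jump_rate_swap_lt // ltnNge (ltnW lt_mu) /= eqxx.
  rewrite eq_sym (negbTE nu_neq) (Psi_exchange_lt family) ?x_i_neq0 ?x_nxt_neq_a //.
  rewrite x_nxt; have [q0|qn] := boolP (0 < q).
    by rewrite x_i q0; field; rewrite n_neq0 gt_eqF ?z_sub_a_neq0.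
  by rewrite x_i_q0 // q_eq0 //; ring.
by rewrite jump_rate_other // !mul0r.
Qed.

Lemma jump_balance_gt : (mu (nxt i) < mu i)%N ->
  balance_eq (fun _ z => if 0 < q then a (mu i) / (z - a (mu i)) else 0).
Proof.
move=> gt_mu z z1; rewrite (big_uniq_supp1 (undup_uniq _) mu_lam) => [|muh _ ne].
  rewrite jump_rate_self gt_mu.
  rewrite (Psi_exchange_gt family) ?a_neq0 ?x_i_neq0 ?x_nxt_neq_a // x_nxt.
  have za := z_sub_a_neq0 (mu i) z1.
  have [q0|qn] := boolP (0 < q).
    by rewrite x_i q0; field; rewrite n_neq0 za gt_eqF.
  by rewrite x_i_q0 // q_eq0 //; field; rewrite n_neq0 za gt_eqF //; lra.
have [->|ne'] := eqVneq muh (actc (sbar i) mu); first by rewrite jump_rate_swap_gt ?mul0r.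
by rewrite jump_rate_other ?mul0r.
Qed.

Lemma jump_balance : exists g : cfg n -> R -> R,
  (forall muh, bigO_inv (g muh)) /\ balance_eq g.
Proof.
have a_01 k : 0 <= a k < 1 by have /andP[a0 a1] := a01 k; rewrite ltW.
case: (ltngtP (mu i) (mu (nxt i))) => [lt_mu|gt_mu|eq_mu].
- eexists; split; last exact: jump_balance_lt.
  by move=> muh /=; case: (muh == _); [apply: bigO_inv_frac | apply: bigO_inv0].
- eexists; split; last exact: jump_balance_gt.
  by move=> muh /=; case: (0 < q); [apply: bigO_inv_frac | apply: bigO_inv0].
- by exists (fun _ _ => 0); split; [move=> _; apply: bigO_inv0 | apply: jump_balance_eq].
Qed.

End JumpBalance.

Theorem lemma6p2 (R : realType) (n : nat) (a : nat -> R) (lam : {ffun 'I_n -> nat})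
    (Psi : {ffun 'I_n -> nat} -> {mpoly R[n]})
    (rho : 'I_n -> nat) (p : 'I_n -> R)
    (mu : {ffun 'I_n -> nat}) (sigma sigmah : {perm 'I_n}) :
  (forall k, 0 < a k < 1) ->
  nondecr lam ->
  is_iTASEP_family a lam Psi ->
  stones_ok rho ->
  (forall j, rho j = 1%N -> 0 <= p j < 1) ->
  mu \in Slam lam ->
  inOmega rho sigma ->
  inOmega rho sigmah ->
  0 < Paux (R:=R) rho sigmah sigma ->
  exists g : {ffun 'I_n -> nat} -> R -> R,
    (forall muh, muh \in Slam lam -> bigO_inv (g muh)) /\
    (forall Rz : R, 1 < Rz ->
       \sum_(muh <- Slam lam)
          Pitasep a p rho muh sigmah mu sigma
          * (Psi muh).@[actv sigmah (chi rho p Rz)] * (1 + g muh Rz)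
       = (Psi mu).@[actv sigma (chi rho p Rz)] * Paux (R:=R) rho sigmah sigma).
Proof.
move=> a01 _ family [rho12 _] p01 mu_lam _ _ /Paux_gt0_cases[->|[i lt_i ->]].
  exists (fun _ _ => 0); split=> [_ _|Rz _]; first exact: bigO_inv0.
  rewrite (big_uniq_supp1 (undup_uniq _) mu_lam) => [|muh _ ne].
    by rewrite Pitasep_stay eqxx mul1r addr0 mulr1 mulrC.
  by rewrite Pitasep_stay eq_sym (negbTE ne) !mul0r.
have [rho_i rho_nxt] := dens_lt_12 rho12 lt_i.
have x_i Rz : actv sigmah (chi rho p Rz) i
    = if 0 < p ((sigmah^-1)%g i) then (p ((sigmah^-1)%g i))^-1 else Rz.
  by rewrite /actv /chi rho_i eqxx.
have x_nxt Rz : actv sigmah (chi rho p Rz) (nxt i) = Rz by rewrite /actv /chi rho_nxt.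
have [g [gO gbal]] := jump_balance a01 family (p01 _ rho_i) mu_lam
  (x := fun Rz => actv sigmah (chi rho p Rz)) x_i x_nxt.
exists g; split=> [muh _|Rz R1]; first exact: gO.
under eq_bigr do rewrite Pitasep_jump //.
by rewrite Paux_jump // actv_pcomp gbal.
Qed.
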